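(* Consider the constant-resource type system, and assume the program is well-typed w.r.t. the signature $\Sigma$ in that system. Let $X\subseteq\mathrm{dom}(\Gamma)$. Suppose $\models E:\Gamma$, $E\vdash e\Downarrow v$, $\Sigma;\Gamma\vdash^{q}_{q'}e:A$ is derivable in the constant-resource type system, $\curlyvee(A\mid A,A)$ holds, and $\curlyvee(\Gamma(x)\mid\Gamma(x),\Gamma(x))$ holds for every $x\in\mathrm{dom}(\Gamma)\setminus X$. Then $e$ is constant resource w.r.t. $X$, i.e. $\mathrm{const}_X(e)$ holds (with respect to the base context $|\Gamma|$).
   Context: Base types: $T ::= \mathsf{unit}\mid\mathsf{bool}\mid\mathsf{int}\mid L(T)\mid T*T$. Values: $v ::= () \mid \mathsf{true}\mid\mathsf{false}\mid n\ (n\in\mathbb Z)\mid [v_1,\dots,v_n]\ (n\ge 0$, the empty list being $\mathsf{nil})\mid (v_1,v_2)$. Value typing $\models v:T$: $()$ has type $\mathsf{unit}$, booleans have type $\mathsf{bool}$, integers have type $\mathsf{int}$, $(v_1,v_2):T_1*T_2$ if $\models v_i:T_i$, and $[v_1,\dots,v_n]:L(T)$ if every $\models v_i:T$ (so $\mathsf{nil}$ has every list type). Expressions (let-normal form; $x,x_i$ are variables, $f$ function identifiers): $e ::= () \mid \mathsf{true}\mid \mathsf{false}\mid n\mid x\mid \mathrm{op}_\diamond(x_1,x_2)\mid \mathrm{app}(f,x)\mid \mathrm{if}(x,e_t,e_f)\mid \mathrm{let}(x,e_1,x.e_2)\mid \mathrm{pair}(x_1,x_2)\mid \mathrm{match}(x,(x_1,x_2).e)\mid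 \mathsf{nil}\mid \mathrm{cons}(x_1,x_2)\mid\mathrm{match}(x,e_1,(x_h,x_t).e_2)\mid\mathrm{share}(x,(x_1,x_2).e)$, with $\diamond\in\{+,-,*,\mathrm{div},\mathrm{mod},=,<>,<,>,\mathrm{and},\mathrm{or}\}$. A program fixes for each function identifier $f$ a body $e_f$ with a single parameter variable $y^f$. An environment $E$ is a finite map from variables to values. Cost semantics: fix arbitrary rational constants $K^{\mathrm{unit}},K^{\mathrm{bool}},K^{\mathrm{int}},K^{\mathrm{nil}},K^{\mathrm{var}},K^{\mathrm{op}},K^{\mathrm{app}},K^{\mathrm{let}},K^{\mathrm{cond}},K^{\mathrm{pair}},K^{\mathrm{matchP}},K^{\mathrm{cons}},K^{\mathrm{matchN}},K^{\mathrm{matchL}}$. The judgement $E\vdash^{q}_{q'} e\Downarrow v$ (all counters $q,q'$ occurring in derivations are in $\mathbb Q_{\ge0}$) is defined inductively: $E\vdash^{q+K^{c}}_{q}c\Downarrow c$ for constants $c\in\{(),\mathsf{true},\mathsf{false},n,\mathsf{nil}\}$ with the corresponding constant $K^{\mathrm{unit}},K^{\mathrm{bool}},K^{\mathrm{int}},K^{\mathrm{nil}}$; $E\vdash^{q+K^{\mathrm{var}}}_q x\Downarrow E(x)$ for $x\in\mathrm{dom}(E)$; $E\vdash^{q+K^{\mathrm{op}}}_q\mathrm{op}_\diamond(x_1,x_2)\Downarrow E(x_1)\diamond E(x_2)$; $E\vdash^{q+K^{\mathrm{pair}}}_q \mathrm{pair}(x_1,x_2)\Downarrow (E(x_1),E(x_2))$;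 $E\vdash^{q+K^{\mathrm{cons}}}_q\mathrm{cons}(x_h,x_t)\Downarrow[v_1,\dots,v_n]$ if $E(x_h)=v_1$ and $E(x_t)=[v_2,\dots,v_n]$; if $E[y^f\mapsto E(x)]\vdash^q_{q'}e_f\Downarrow v$ then $E\vdash^{q+K^{\mathrm{app}}}_{q'}\mathrm{app}(f,x)\Downarrow v$; if $E\vdash^{q-K^{\mathrm{let}}}_{q_1}e_1\Downarrow v_1$ and $E[x\mapsto v_1]\vdash^{q_1}_{q'}e_2\Downarrow v$ then $E\vdash^q_{q'}\mathrm{let}(x,e_1,x.e_2)\Downarrow v$; if $E(x)=\mathsf{true}$ and $E\vdash^{q-K^{\mathrm{cond}}}_{q'}e_t\Downarrow v$ (resp. $E(x)=\mathsf{false}$ and $E\vdash^{q-K^{\mathrm{cond}}}_{q'}e_f\Downarrow v$) then $E\vdash^q_{q'}\mathrm{if}(x,e_t,e_f)\Downarrow v$; if $E(x)=(v_1,v_2)$ and $E[x_1\mapsto v_1,x_2\mapsto v_2]\vdash^{q-K^{\mathrm{matchP}}}_{q'}e\Downarrow v$ then $E\vdash^q_{q'}\mathrm{match}(x,(x_1,x_2).e)\Downarrow v$; if $E(x)=\mathsf{nil}$ and $E\vdash^{q-K^{\mathrm{matchN}}}_{q'}e_1\Downarrow v$ then $E\vdash^q_{q'}\mathrm{match}(x,e_1,(x_h,x_t).e_2)\Downarrow v$; if $E(x)=[v_1,\dots,v_n]$ with $n\ge1$ and $E[x_h\mapsto v_1,x_t\mapsto[v_2,\dots,v_n]]\vdash^{q-K^{\mathrm{matchL}}}_{q'}e_2\Downarrow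 v$ then $E\vdash^q_{q'}\mathrm{match}(x,e_1,(x_h,x_t).e_2)\Downarrow v$; if $E(x)=v_1$ and $(E\setminus\{x\})[x_1\mapsto v_1,x_2\mapsto v_1]\vdash^q_{q'}e\Downarrow v$ then $E\vdash^q_{q'}\mathrm{share}(x,(x_1,x_2).e)\Downarrow v$. We write $E\vdash e\Downarrow v$ if $E\vdash^q_{q'}e\Downarrow v$ for some $q,q'$. Size equivalence of values $|v|\approx|u|$ is the least relation with: $|v|\approx|u|$ whenever $\models v:T$ and $\models u:T$ for some $T\in\{\mathsf{unit},\mathsf{bool},\mathsf{int}\}$; $|(v_1,v_2)|\approx|(u_1,u_2)|$ if $|v_i|\approx|u_i|$ for $i=1,2$; $|[v_1,\dots,v_n]|\approx|[u_1,\dots,u_m]|$ if $m=n$ and $|v_i|\approx|u_i|$ for all $i$. A base context $\Delta$ is a finite map from variables to base types; an environment $E$ is well-formed w.r.t. $\Delta$, written $\models E:\Delta$, if $\models E(x):\Delta(x)$ for all $x\in\mathrm{dom}(\Delta)$. For $X\subseteq\mathrm{dom}(\Delta)$ and well-formed $E_1,E_2$, $E_1\approx_X E_2$ means $|E_1(x)|\approx|E_2(x)|$ for all $x\in X$. An expression $e$ is constant resource w.r.t. $X\subseteq\mathrm{dom}(\Delta)$, written $\mathrm{const}_X(e)$, if for all $E_1,E_2$ with $\models E_i:\Delta$ and $E_1\approx_X E_2$: whenever $E_1\vdash^{p_1}_{p_1'}e\Downarrow v_1$ and $E_2\vdash^{p_2}_{p_2'}e\Downarrow v_2$, then $p_1-p_1'=p_2-p_2'$.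 Resource-annotated types: $A ::= \mathsf{unit}\mid\mathsf{bool}\mid\mathsf{int}\mid L^p(A)\mid A*A$ with $p\in\mathbb Q_{\ge0}$; $|A|$ denotes the base type obtained by erasing annotations. An annotated context $\Gamma$ is a finite map from variables to annotated types, $|\Gamma|$ its erasure; $\Gamma_1,\Gamma_2$ denotes the union of contexts with disjoint domains (contexts are unordered). $\models E:\Gamma$ means $\models E(x):|\Gamma(x)|$ for all $x\in\mathrm{dom}(\Gamma)$. Potential: $\Phi(v:A)=0$ for $A\in\{\mathsf{unit},\mathsf{bool},\mathsf{int}\}$; $\Phi((v_1,v_2):A_1*A_2)=\Phi(v_1:A_1)+\Phi(v_2:A_2)$; $\Phi([v_1,\dots,v_n]:L^p(A))=n\cdot p+\sum_{i=1}^n\Phi(v_i:A)$; $\Phi_E(\Gamma)=\sum_{x\in\mathrm{dom}(\Gamma)}\Phi(E(x):\Gamma(x))$. Sharing relation: $\curlyvee(A\mid A,A)$ for $A\in\{\mathsf{unit},\mathsf{bool},\mathsf{int}\}$; $\curlyvee(A*B\mid A_1*B_1,A_2*B_2)$ if $\curlyvee(A\mid A_1,A_2)$ and $\curlyvee(B\mid B_1,B_2)$; $\curlyvee(L^p(A)\mid L^{p_1}(A_1),L^{p_2}(A_2))$ if $\curlyvee(A\mid A_1,A_2)$ and $p=p_1+p_2$. A signature $\Sigma$ maps function identifiers to nonempty sets of annotated function types $A_1\xrightarrow{q/q'}A_2$ ($q,q'\in\mathbb Q_{\ge0}$). Typing judgements $\Sigma;\Gamma\vdash^{q}_{q'}e:A$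 with $q,q'\in\mathbb Q_{\ge0}$ (every annotation in a rule instance must be a nonnegative rational). Syntax-directed rules: $\Sigma;\emptyset\vdash^{K^{\mathrm{unit}}}_0():\mathsf{unit}$; $\Sigma;\emptyset\vdash^{K^{\mathrm{bool}}}_0 b:\mathsf{bool}$; $\Sigma;\emptyset\vdash^{K^{\mathrm{int}}}_0 n:\mathsf{int}$; $\Sigma;\emptyset\vdash^{K^{\mathrm{nil}}}_0\mathsf{nil}:L^p(A)$; $\Sigma;x:A\vdash^{K^{\mathrm{var}}}_0x:A$; $\Sigma;x_1:\mathsf{bool},x_2:\mathsf{bool}\vdash^{K^{\mathrm{op}}}_0\mathrm{op}_\diamond(x_1,x_2):\mathsf{bool}$ for $\diamond\in\{\mathrm{and},\mathrm{or}\}$; $\Sigma;x_1:\mathsf{int},x_2:\mathsf{int}\vdash^{K^{\mathrm{op}}}_0\mathrm{op}_\diamond(x_1,x_2):\mathsf{bool}$ for comparisons and $:\mathsf{int}$ for $+,-,*,\mathrm{div},\mathrm{mod}$; if $A_1\xrightarrow{q/q'}A_2\in\Sigma(f)$ then $\Sigma;x:A_1\vdash^{q+K^{\mathrm{app}}}_{q'}\mathrm{app}(f,x):A_2$; from $\Sigma;\Gamma_1\vdash^{q-K^{\mathrm{let}}}_{q_1}e_1:A_1$ and $\Sigma;\Gamma_2,x:A_1\vdash^{q_1}_{q'}e_2:A_2$ infer $\Sigma;\Gamma_1,\Gamma_2\vdash^q_{q'}\mathrm{let}(x,e_1,x.e_2):A_2$; from $\Sigma;\Gamma\vdash^{q-K^{\mathrm{cond}}}_{q'}e_t:A$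 and $\Sigma;\Gamma\vdash^{q-K^{\mathrm{cond}}}_{q'}e_f:A$ infer $\Sigma;\Gamma,x:\mathsf{bool}\vdash^q_{q'}\mathrm{if}(x,e_t,e_f):A$; $\Sigma;x_1:A_1,x_2:A_2\vdash^{K^{\mathrm{pair}}}_0\mathrm{pair}(x_1,x_2):A_1*A_2$; from $\Sigma;\Gamma,x_1:A_1,x_2:A_2\vdash^{q-K^{\mathrm{matchP}}}_{q'}e:A$ infer $\Sigma;\Gamma,x:A_1*A_2\vdash^q_{q'}\mathrm{match}(x,(x_1,x_2).e):A$; $\Sigma;x_h:A,x_t:L^p(A)\vdash^{p+K^{\mathrm{cons}}}_0\mathrm{cons}(x_h,x_t):L^p(A)$; from $\Sigma;\Gamma\vdash^{q-K^{\mathrm{matchN}}}_{q'}e_1:B$ and $\Sigma;\Gamma,x_h:A,x_t:L^p(A)\vdash^{q+p-K^{\mathrm{matchL}}}_{q'}e_2:B$ infer $\Sigma;\Gamma,x:L^p(A)\vdash^q_{q'}\mathrm{match}(x,e_1,(x_h,x_t).e_2):B$; from $\Sigma;\Gamma,x_1:A_1,x_2:A_2\vdash^q_{q'}e:B$ and $\curlyvee(A\mid A_1,A_2)$ infer $\Sigma;\Gamma,x:A\vdash^q_{q'}\mathrm{share}(x,(x_1,x_2).e):B$. Structural rules of the constant-resource system: (Relax) from $\Sigma;\Gamma\vdash^p_{p'}e:A$, $q\ge p$ and $q-p=q'-p'$ infer $\Sigma;\Gamma\vdash^q_{q'}e:A$; (Weakening) from $\Sigma;\Gamma\vdash^q_{q'}e:B$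 and $\curlyvee(A\mid A,A)$ infer $\Sigma;\Gamma,x:A\vdash^q_{q'}e:B$. The program is well-typed w.r.t. $\Sigma$ in this system if for every $f$ and every $A_1\xrightarrow{q/q'}A_2\in\Sigma(f)$, $\Sigma;y^f:A_1\vdash^q_{q'}e_f:A_2$ is derivable. *)

From Stdlib Require Import ZArith.
From HB Require Import structures.
From mathcomp Require Import all_boot all_order all_algebra.
Set Implicit Arguments. Unset Strict Implicit. Unset Printing Implicit Defensive.
Import Order.TTheory GRing.Theory Num.Theory.
Local Open Scope ring_scope.

Inductive btype : Type :=
| TUnit | TBool | TInt | TList (T : btype) | TProd (T1 T2 : btype).

Inductive value : Type :=
| VUnit | VBool (b : bool) | VInt (n : Z) | VList (vs : seq value) | VPair (v1 v2 : value).

Inductive vtype : value -> btype -> Prop :=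
| vt_unit : vtype VUnit TUnit
| vt_bool b : vtype (VBool b) TBool
| vt_int n : vtype (VInt n) TInt
| vt_pair v1 v2 T1 T2 : vtype v1 T1 -> vtype v2 T2 -> vtype (VPair v1 v2) (TProd T1 T2)
| vt_list vs T : (forall v, List.In v vs -> vtype v T) -> vtype (VList vs) (TList T).

Definition var := nat.
Definition fid := nat.

Inductive binop : Type :=
| OAdd | OSub | OMul | ODiv | OMod | OEq | ONeq | OLt | OGt | OAnd | OOr.

Inductive expr : Type :=
| EUnit | ETrue | EFalse | EInt (n : Z)
| EVar (x : var)
| EOp (o : binop) (x1 x2 : var)
| EApp (f : fid) (x : var)
| EIf (x : var) (et ef : expr)
| ELet (x : var) (e1 e2 : expr)
| EPair (x1 x2 : var)
| EMatchP (x x1 x2 : var) (e : expr)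
| ENil
| ECons (xh xt : var)
| EMatchL (x : var) (e1 : expr) (xh xt : var) (e2 : expr)
| EShare (x x1 x2 : var) (e : expr).

(* v1 <> v2 computed by the primitive operator; arithmetic and comparisons on
   integers, and/or on booleans; div/mod are Stdlib's total Z.div / Z.modulo. *)
Definition op_eval (o : binop) (v1 v2 : value) : option value :=
  match o, v1, v2 with
  | OAdd, VInt a, VInt b => Some (VInt (Z.add a b))
  | OSub, VInt a, VInt b => Some (VInt (Z.sub a b))
  | OMul, VInt a, VInt b => Some (VInt (Z.mul a b))
  | ODiv, VInt a, VInt b => Some (VInt (Z.div a b))
  | OMod, VInt a, VInt b => Some (VInt (Z.modulo a b))
  | OEq, VInt a, VInt b => Some (VBool (Z.eqb a b))
  | ONeq, VInt a, VInt b => Some (VBool (negb (Z.eqb a b)))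
  | OLt, VInt a, VInt b => Some (VBool (Z.ltb a b))
  | OGt, VInt a, VInt b => Some (VBool (Z.ltb b a))
  | OAnd, VBool a, VBool b => Some (VBool (a && b))
  | OOr, VBool a, VBool b => Some (VBool (a || b))
  | _, _, _ => None
  end.

Definition program := fid -> (var * expr).

Record costs := Costs {
  K_unit : rat; K_bool : rat; K_int : rat; K_nil : rat; K_var : rat;
  K_op : rat; K_app : rat; K_let : rat; K_cond : rat; K_pair : rat;
  K_matchP : rat; K_cons : rat; K_matchN : rat; K_matchL : rat }.

Definition env := var -> option value.
Definition upd (E : env) (x : var) (v : value) : env :=
  fun y => if y == x then Some v else E y.
Definition remove (E : env) (x : var) : env :=
  fun y => if y == x then None else E y.

Inductive eval (K : costs) (P : program) : env -> rat -> rat -> expr -> value -> Prop :=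
| ev_unit E q : 0 <= q -> 0 <= q + K_unit K ->
    eval K P E (q + K_unit K) q EUnit VUnit
| ev_true E q : 0 <= q -> 0 <= q + K_bool K ->
    eval K P E (q + K_bool K) q ETrue (VBool true)
| ev_false E q : 0 <= q -> 0 <= q + K_bool K ->
    eval K P E (q + K_bool K) q EFalse (VBool false)
| ev_int E q n : 0 <= q -> 0 <= q + K_int K ->
    eval K P E (q + K_int K) q (EInt n) (VInt n)
| ev_nil E q : 0 <= q -> 0 <= q + K_nil K ->
    eval K P E (q + K_nil K) q ENil (VList [::])
| ev_var E q x v : 0 <= q -> 0 <= q + K_var K -> E x = Some v ->
    eval K P E (q + K_var K) q (EVar x) v
| ev_op E q o x1 x2 v1 v2 v : 0 <= q -> 0 <= q + K_op K ->
    E x1 = Some v1 -> E x2 = Some v2 -> op_eval o v1 v2 = Some v ->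
    eval K P E (q + K_op K) q (EOp o x1 x2) v
| ev_pair E q x1 x2 v1 v2 : 0 <= q -> 0 <= q + K_pair K ->
    E x1 = Some v1 -> E x2 = Some v2 ->
    eval K P E (q + K_pair K) q (EPair x1 x2) (VPair v1 v2)
| ev_cons E q xh xt vh vs : 0 <= q -> 0 <= q + K_cons K ->
    E xh = Some vh -> E xt = Some (VList vs) ->
    eval K P E (q + K_cons K) q (ECons xh xt) (VList (vh :: vs))
| ev_app E q q' f x vx v : 0 <= q + K_app K -> E x = Some vx ->
    eval K P (upd E (P f).1 vx) q q' (P f).2 v ->
    eval K P E (q + K_app K) q' (EApp f x) v
| ev_let E q q1 q' x e1 e2 v1 v : 0 <= q ->
    eval K P E (q - K_let K) q1 e1 v1 ->
    eval K P (upd E x v1) q1 q' e2 v ->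
    eval K P E q q' (ELet x e1 e2) v
| ev_if_true E q q' x et ef v : 0 <= q -> E x = Some (VBool true) ->
    eval K P E (q - K_cond K) q' et v ->
    eval K P E q q' (EIf x et ef) v
| ev_if_false E q q' x et ef v : 0 <= q -> E x = Some (VBool false) ->
    eval K P E (q - K_cond K) q' ef v ->
    eval K P E q q' (EIf x et ef) v
| ev_matchP E q q' x x1 x2 e v1 v2 v : 0 <= q -> E x = Some (VPair v1 v2) ->
    eval K P (upd (upd E x1 v1) x2 v2) (q - K_matchP K) q' e v ->
    eval K P E q q' (EMatchP x x1 x2 e) v
| ev_matchN E q q' x e1 xh xt e2 v : 0 <= q -> E x = Some (VList [::]) ->
    eval K P E (q - K_matchN K) q' e1 v ->
    eval K P E q q' (EMatchL x e1 xh xt e2) v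
| ev_matchL E q q' x e1 xh xt e2 vh vs v : 0 <= q -> E x = Some (VList (vh :: vs)) ->
    eval K P (upd (upd E xh vh) xt (VList vs)) (q - K_matchL K) q' e2 v ->
    eval K P E q q' (EMatchL x e1 xh xt e2) v
| ev_share E q q' x x1 x2 e v1 v : E x = Some v1 ->
    eval K P (upd (upd (remove E x) x1 v1) x2 v1) q q' e v ->
    eval K P E q q' (EShare x x1 x2 e) v.

Definition evals K P E e v : Prop := exists q q', eval K P E q q' e v.

Definition is_prim (T : btype) : bool :=
  match T with TUnit | TBool | TInt => true | _ => false end.

Inductive size_eq : value -> value -> Prop :=
| se_prim v u T : is_prim T -> vtype v T -> vtype u T -> size_eq v u
| se_pair v1 v2 u1 u2 : size_eq v1 u1 -> size_eq v2 u2 ->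
    size_eq (VPair v1 v2) (VPair u1 u2)
| se_list vs us : size vs = size us ->
    (forall i : nat, (i < size vs)%N -> size_eq (nth VUnit vs i) (nth VUnit us i)) ->
    size_eq (VList vs) (VList us).

Definition bctx := var -> option btype.

Definition env_wf (E : env) (D : bctx) : Prop :=
  forall x T, D x = Some T -> exists v, E x = Some v /\ vtype v T.

Definition env_approx (X : var -> Prop) (E1 E2 : env) : Prop :=
  forall x, X x -> exists v1 v2, E1 x = Some v1 /\ E2 x = Some v2 /\ size_eq v1 v2.

Definition const_res (K : costs) (P : program) (D : bctx) (X : var -> Prop) (e : expr) : Prop :=
  forall E1 E2, env_wf E1 D -> env_wf E2 D -> env_approx X E1 E2 ->
  forall p1 p1' v1 p2 p2' v2,
    eval K P E1 p1 p1' e v1 -> eval K P E2 p2 p2' e v2 -> p1 - p1' = p2 - p2'.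

Record nnrat := NNRat { nnval :> rat; nnval_ge0 : 0 <= nnval }.

Inductive atype : Type :=
| AUnit | ABool | AInt | AList (p : nnrat) (A : atype) | APair (A1 A2 : atype).

Fixpoint erase (A : atype) : btype :=
  match A with
  | AUnit => TUnit | ABool => TBool | AInt => TInt
  | AList _ A => TList (erase A)
  | APair A1 A2 => TProd (erase A1) (erase A2)
  end.

Definition ctx := var -> option atype.
Definition cempty : ctx := fun _ => None.
Definition cext (G : ctx) (x : var) (A : atype) : ctx :=
  fun y => if y == x then Some A else G y.
Definition csing (x : var) (A : atype) : ctx := cext cempty x A.
Definition cunion (G1 G2 : ctx) : ctx :=
  fun y => match G1 y with Some A => Some A | None => G2 y end.
Definition cdisj (G1 G2 : ctx) : Prop := forall y, G1 y = None \/ G2 y = None.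
Definition cerase (G : ctx) : bctx := fun y => omap erase (G y).

Definition env_wf_ctx (E : env) (G : ctx) : Prop := env_wf E (cerase G).

Inductive share : atype -> atype -> atype -> Prop :=
| sh_unit : share AUnit AUnit AUnit
| sh_bool : share ABool ABool ABool
| sh_int : share AInt AInt AInt
| sh_pair A B A1 B1 A2 B2 : share A A1 A2 -> share B B1 B2 ->
    share (APair A B) (APair A1 B1) (APair A2 B2)
| sh_list p A p1 A1 p2 A2 : share A A1 A2 -> nnval p = nnval p1 + nnval p2 ->
    share (AList p A) (AList p1 A1) (AList p2 A2).

(* signature: Sig f A1 q q' A2  means  A1 -q/q'-> A2 ∈ Σ(f) *)
Definition signature := fid -> atype -> rat -> rat -> atype -> Prop.
Definition sig_nonneg (S : signature) : Prop :=
  forall f A1 q q' A2, S f A1 q q' A2 -> 0 <= q /\ 0 <= q'.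

Definition arith_op (o : binop) : bool :=
  match o with OAdd | OSub | OMul | ODiv | OMod => true | _ => false end.
Definition cmp_op (o : binop) : bool :=
  match o with OEq | ONeq | OLt | OGt => true | _ => false end.
Definition bool_op (o : binop) : bool :=
  match o with OAnd | OOr => true | _ => false end.

Inductive typed (K : costs) (S : signature) : ctx -> rat -> rat -> expr -> atype -> Prop :=
| ty_unit : 0 <= K_unit K -> typed K S cempty (K_unit K) 0 EUnit AUnit
| ty_true : 0 <= K_bool K -> typed K S cempty (K_bool K) 0 ETrue ABool
| ty_false : 0 <= K_bool K -> typed K S cempty (K_bool K) 0 EFalse ABool
| ty_int n : 0 <= K_int K -> typed K S cempty (K_int K) 0 (EInt n) AInt
| ty_nil p A : 0 <= K_nil K -> typed K S cempty (K_nil K) 0 ENil (AList p A)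
| ty_var x A : 0 <= K_var K -> typed K S (csing x A) (K_var K) 0 (EVar x) A
| ty_op_bool o x1 x2 : bool_op o -> x1 <> x2 -> 0 <= K_op K ->
    typed K S (cext (csing x1 ABool) x2 ABool) (K_op K) 0 (EOp o x1 x2) ABool
| ty_op_cmp o x1 x2 : cmp_op o -> x1 <> x2 -> 0 <= K_op K ->
    typed K S (cext (csing x1 AInt) x2 AInt) (K_op K) 0 (EOp o x1 x2) ABool
| ty_op_arith o x1 x2 : arith_op o -> x1 <> x2 -> 0 <= K_op K ->
    typed K S (cext (csing x1 AInt) x2 AInt) (K_op K) 0 (EOp o x1 x2) AInt
| ty_app f x A1 A2 q q' : S f A1 q q' A2 -> 0 <= q + K_app K -> 0 <= q' ->
    typed K S (csing x A1) (q + K_app K) q' (EApp f x) A2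
| ty_let G1 G2 q q1 q' x e1 e2 A1 A2 :
    cdisj G1 G2 -> G2 x = None -> 0 <= q -> 0 <= q' ->
    typed K S G1 (q - K_let K) q1 e1 A1 ->
    typed K S (cext G2 x A1) q1 q' e2 A2 ->
    typed K S (cunion G1 G2) q q' (ELet x e1 e2) A2
| ty_if G q q' x et ef A : G x = None -> 0 <= q -> 0 <= q' ->
    typed K S G (q - K_cond K) q' et A ->
    typed K S G (q - K_cond K) q' ef A ->
    typed K S (cext G x ABool) q q' (EIf x et ef) A
| ty_pair x1 x2 A1 A2 : x1 <> x2 -> 0 <= K_pair K ->
    typed K S (cext (csing x1 A1) x2 A2) (K_pair K) 0 (EPair x1 x2) (APair A1 A2)
| ty_matchP G q q' x x1 x2 e A1 A2 A :
    G x = None -> G x1 = None -> G x2 = None -> x1 <> x2 -> 0 <= q -> 0 <= q' ->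
    typed K S (cext (cext G x1 A1) x2 A2) (q - K_matchP K) q' e A ->
    typed K S (cext G x (APair A1 A2)) q q' (EMatchP x x1 x2 e) A
| ty_cons xh xt (p : nnrat) A : xh <> xt -> 0 <= nnval p + K_cons K ->
    typed K S (cext (csing xh A) xt (AList p A)) (nnval p + K_cons K) 0 (ECons xh xt) (AList p A)
| ty_matchL G q q' x e1 xh xt e2 (p : nnrat) A B :
    G x = None -> G xh = None -> G xt = None -> xh <> xt -> 0 <= q -> 0 <= q' ->
    typed K S G (q - K_matchN K) q' e1 B ->
    typed K S (cext (cext G xh A) xt (AList p A)) (q + nnval p - K_matchL K) q' e2 B ->
    typed K S (cext G x (AList p A)) q q' (EMatchL x e1 xh xt e2) B
| ty_share G q q' x x1 x2 e A A1 A2 B :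
    G x = None -> G x1 = None -> G x2 = None -> x1 <> x2 -> 0 <= q -> 0 <= q' ->
    typed K S (cext (cext G x1 A1) x2 A2) q q' e B ->
    share A A1 A2 ->
    typed K S (cext G x A) q q' (EShare x x1 x2 e) B
| ty_relax G p p' q q' e A :
    typed K S G p p' e A -> p <= q -> q - p = q' - p' -> 0 <= q' ->
    typed K S G q q' e A
| ty_weak G q q' x e A B :
    G x = None -> typed K S G q q' e B -> share A A A ->
    typed K S (cext G x A) q q' e B.

Definition prog_welltyped (K : costs) (P : program) (S : signature) : Prop :=
  forall f A1 q q' A2, S f A1 q q' A2 -> typed K S (csing (P f).1 A1) q q' (P f).2 A2.

From Stdlib Require Import Classical.
From mathcomp Require Import all_boot all_order all_algebra.
From mathcomp Require Import ring lra.
Set Implicit Arguments. Unset Strict Implicit. Unset Printing Implicit Defensive.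
Import Order.TTheory GRing.Theory Num.Theory.
Local Open Scope ring_scope.

(* Evaluation is exactly balanced by the type annotations plus potential:
   p - p' = q + Phi_E(Gamma) - (q' + Phi(v : A)) for every evaluation of a typed expression
   ([eval_balanced]).  This needs no slack because the constant-resource system never
   discards potential: relaxation keeps q - q' fixed and weakening only adds variables
   whose type A satisfies [share A A A], i.e. carries potential 0.  Under the hypotheses Phi(v : A) = 0, the
   variables outside X carry no potential, and those in X hold size-equivalent values, on
   which potentials agree; so two evaluations in such environments cost the same. *)

Fixpoint pot (v : value) (A : atype) {struct A} : rat :=
  match A, v with
  | APair A1 A2, VPair v1 v2 => pot v1 A1 + pot v2 A2
  | AList p B, VList vs => foldr (fun w r => nnval p + pot w B + r) 0 vs
  | _, _ => 0
  end.

Lemma pot_cons w ws p B :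
  pot (VList (w :: ws)) (AList p B) = nnval p + pot w B + pot (VList ws) (AList p B).
Proof. by []. Qed.

Lemma pot_share A A1 A2 v : share A A1 A2 -> pot v A = pot v A1 + pot v A2.
Proof.
move=> sh; elim: sh v => {A A1 A2}
  [| | |A B A1 B1 A2 B2 _ IHA _ IHB|p A p1 A1 p2 A2 _ IHA Hp] v; rewrite /= ?addr0 //.
- by case: v => // v1 v2; rewrite IHA IHB addrACA.
- case: v => // vs; elim: vs => [|w ws IHws] /=; first by rewrite addr0.
  rewrite IHws IHA Hp; ring.
Qed.

Lemma pot_share_self A v : share A A A -> pot v A = 0.
Proof. by move=> sh; have := pot_share v sh; lra. Qed.

Lemma pot_size_eq v u A : size_eq v u -> pot v A = pot u A.
Proof.
move=> vu; elim: vu A => {v u} [v u T prim vT uT|v1 v2 u1 u2 _ IH1 _ IH2|vs us + _ IH] A.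
- by case: T prim vT uT => // _ vT uT; inversion vT; inversion uT; case: A.
- by case: A => //= A1 A2; rewrite IH1 IH2.
- case: A => // p B; elim: vs us IH => [|w ws IHws] [|z zs] // IH [Hs].
  by rewrite !pot_cons (IH 0%N) // (IHws zs) // => i; apply: (IH i.+1).
Qed.

Definition opot (o : option value) (oA : option atype) : rat :=
  match o, oA with Some v, Some A => pot v A | _, _ => 0 end.

Lemma opot_None o : opot o None = 0.
Proof. by case: o. Qed.

Lemma opot_share_self o A : share A A A -> opot o (Some A) = 0.
Proof. by case: o => //= v; apply: pot_share_self. Qed.

Definition ctx_bounded (G : ctx) (N : nat) := forall y, G y <> None -> (y < N)%N.

(* For [ctx_bounded G N] this is the potential Phi_E(G), independently of N. *)
Definition ctx_pot (E : env) (G : ctx) (N : nat) : rat :=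
  \sum_(0 <= y < N) opot (E y) (G y).

Lemma ctx_bounded_cempty N : ctx_bounded cempty N.
Proof. by []. Qed.

Lemma ctx_bounded_cext G x A N :
  ctx_bounded G N -> ctx_bounded (cext G x A) (maxn N x.+1).
Proof.
move=> bG y; rewrite /cext leq_max; case: eqP => [-> _|_ /bG ->]; last by [].
by rewrite ltnSn orbT.
Qed.

Lemma ctx_bounded_cext_inv G x A N :
  ctx_bounded (cext G x A) N -> ctx_bounded G N /\ (x < N)%N.
Proof.
move=> b; split; last by apply: b; rewrite /cext eqxx.
by move=> y Gy; apply: b; rewrite /cext; case: eqP.
Qed.

Lemma ctx_bounded_cunion G1 G2 N1 N2 :
  ctx_bounded G1 N1 -> ctx_bounded G2 N2 -> ctx_bounded (cunion G1 G2) (maxn N1 N2).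
Proof.
move=> b1 b2 y; rewrite /cunion leq_max; case G1y: (G1 y) => [B|] G12y.
  by rewrite b1 // G1y.
by rewrite b2 ?orbT.
Qed.

Lemma ctx_bounded_cunion_inv G1 G2 N :
  ctx_bounded (cunion G1 G2) N -> ctx_bounded G1 N /\ ctx_bounded G2 N.
Proof.
rewrite /cunion => b; split=> y Gy; apply: b; first by case: (G1 y) Gy.
by case: (G1 y).
Qed.

Lemma typed_ctx_bounded K S G q q' e A : typed K S G q q' e A -> exists N, ctx_bounded G N.
Proof.
elim=> {G q q' e A}; try by exists 0%N; apply: ctx_bounded_cempty.
all: try by eexists; do 2?apply: ctx_bounded_cext; apply: (ctx_bounded_cempty 0).
- move=> G1 G2 q q1 q' x e1 e2 A1 A2 _ _ _ _ _ [N1 b1] _ [N2 /ctx_bounded_cext_inv[b2 _]].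
  by exists (maxn N1 N2); apply: ctx_bounded_cunion.
- move=> G q q' x et ef A _ _ _ _ [N b] _ _.
  by exists (maxn N x.+1); apply: ctx_bounded_cext.
- move=> G q q' x x1 x2 e A1 A2 A _ _ _ _ _ _ _
    [N /ctx_bounded_cext_inv[/ctx_bounded_cext_inv[b _] _]].
  by exists (maxn N x.+1); apply: ctx_bounded_cext.
- move=> G q q' x e1 xh xt e2 p A B _ _ _ _ _ _ _ [N b] _ _.
  by exists (maxn N x.+1); apply: ctx_bounded_cext.
- move=> G q q' x x1 x2 e A A1 A2 B _ _ _ _ _ _ _
    [N /ctx_bounded_cext_inv[/ctx_bounded_cext_inv[b _] _]] _.
  by exists (maxn N x.+1); apply: ctx_bounded_cext.
- by move=> G p p' q q' e A _ [N b]; exists N.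
- move=> G q q' x e A B _ _ [N b] _.
  by exists (maxn N x.+1); apply: ctx_bounded_cext.
Qed.

Lemma ctx_pot_bound_irr E G N1 N2 :
  ctx_bounded G N1 -> ctx_bounded G N2 -> ctx_pot E G N1 = ctx_pot E G N2.
Proof.
wlog le12 : N1 N2 / (N1 <= N2)%N.
  by move=> W b1 b2; case: (leqP N1 N2) => [|/ltnW] le; [|symmetry]; apply: W.
move=> b1 _; rewrite /ctx_pot (big_cat_nat (leq0n N1) le12) /=.
rewrite -[LHS]addr0; congr (_ + _); symmetry.
rewrite big_nat_cond big1 // => y /andP[/andP[N1y _] _].
case Gy: (G y) => [B|]; last by rewrite opot_None.
suff : (y < N1)%N by rewrite ltnNge N1y.
by apply: b1; rewrite Gy.
Qed.

Lemma eq_ctx_pot E1 G1 E2 G2 N :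
  (forall y, opot (E1 y) (G1 y) = opot (E2 y) (G2 y)) -> ctx_pot E1 G1 N = ctx_pot E2 G2 N.
Proof. by move=> eq12; apply: eq_bigr. Qed.

Lemma ctx_pot_cempty E N : ctx_pot E cempty N = 0.
Proof. by rewrite /ctx_pot big1 // => y _; rewrite opot_None. Qed.

Lemma ctx_pot_cext E G x A N : G x = None -> ctx_bounded (cext G x A) N ->
  ctx_pot E (cext G x A) N = ctx_pot E G N + opot (E x) (Some A).
Proof.
move=> Gx /ctx_bounded_cext_inv[_ xN].
have xI : x \in index_iota 0 N by rewrite mem_index_iota.
rewrite /ctx_pot (bigD1_seq x) ?iota_uniq //= [in RHS](bigD1_seq x) ?iota_uniq //=.
rewrite /cext eqxx Gx opot_None add0r addrC; congr (_ + _).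
by apply: eq_bigr => y /negbTE ->.
Qed.

Lemma ctx_pot_cunion E G1 G2 N : cdisj G1 G2 ->
  ctx_pot E (cunion G1 G2) N = ctx_pot E G1 N + ctx_pot E G2 N.
Proof.
move=> disj; rewrite /ctx_pot -big_split /=; apply: eq_bigr => y _; rewrite /cunion.
case: (disj y) => ->; first by rewrite opot_None add0r.
by case: (G1 y) => [B|] /=; rewrite opot_None addr0.
Qed.

Lemma ctx_pot_remove E G x N : G x = None -> ctx_pot (remove E x) G N = ctx_pot E G N.
Proof.
by move=> Gx; apply: eq_ctx_pot => y; rewrite /remove; case: eqP => // ->; rewrite Gx !opot_None.
Qed.

Lemma ctx_pot_csing E x A N :
  ctx_bounded (csing x A) N -> ctx_pot E (csing x A) N = opot (E x) (Some A).
Proof. by move=> b; rewrite ctx_pot_cext // ctx_pot_cempty add0r. Qed.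

Lemma ctx_pot_csing2 E x1 x2 A1 A2 N : x1 <> x2 ->
  ctx_bounded (cext (csing x1 A1) x2 A2) N ->
  ctx_pot E (cext (csing x1 A1) x2 A2) N = opot (E x1) (Some A1) + opot (E x2) (Some A2).
Proof.
move=> x12 b; have [b1 _] := ctx_bounded_cext_inv b.
by rewrite ctx_pot_cext ?ctx_pot_csing // /csing /cext; case: eqP => // x21; case: x12.
Qed.

Lemma ctx_pot_upd E G x A w N : G x = None -> ctx_bounded G N ->
  exists2 M, ctx_bounded (cext G x A) M &
    ctx_pot (upd E x w) (cext G x A) M = ctx_pot E G N + pot w A.
Proof.
move=> Gx bN; have bM := ctx_bounded_cext (x := x) (A := A) bN; exists (maxn N x.+1) => //.
have [bG _] := ctx_bounded_cext_inv bM.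
rewrite ctx_pot_cext // (ctx_pot_bound_irr _ bN bG) /upd eqxx; congr (_ + _).
by apply: eq_ctx_pot => y; case: eqP => // ->; rewrite Gx !opot_None.
Qed.

Lemma ctx_pot_upd2 E G x1 x2 A1 A2 w1 w2 N :
  G x1 = None -> G x2 = None -> x1 <> x2 -> ctx_bounded G N ->
  exists2 M, ctx_bounded (cext (cext G x1 A1) x2 A2) M &
    ctx_pot (upd (upd E x1 w1) x2 w2) (cext (cext G x1 A1) x2 A2) M
      = ctx_pot E G N + pot w1 A1 + pot w2 A2.
Proof.
move=> Gx1 Gx2 x12 bN; have [M1 bM1 eqM1] := ctx_pot_upd E A1 w1 Gx1 bN.
have Gx2' : cext G x1 A1 x2 = None by rewrite /cext; case: eqP => // x21; case: x12.
have [M bM eqM] := ctx_pot_upd (upd E x1 w1) A2 w2 Gx2' bM1.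
by exists M; rewrite // eqM eqM1.
Qed.

Definition balanced (E : env) (p p' : rat) (v : value) (G : ctx) (q q' : rat) (A : atype) :=
  forall N, ctx_bounded G N -> p - p' = q + ctx_pot E G N - (q' + pot v A).

Lemma balanced_relax E p p' v G r r' q q' A :
  balanced E p p' v G r r' A -> q - r = q' - r' -> balanced E p p' v G q q' A.
Proof. by move=> bal qr N b; rewrite (bal N b); lra. Qed.

Lemma balanced_weaken E p p' v G q q' x A B : G x = None -> share A A A ->
  balanced E p p' v G q q' B -> balanced E p p' v (cext G x A) q q' B.
Proof.
move=> Gx shA bal N b; have [bG _] := ctx_bounded_cext_inv b.
by rewrite ctx_pot_cext // opot_share_self // addr0 (bal N bG).
Qed.

Section CostEquation.

Variables (K : costs) (P : program) (S : signature).

Definition typings_balanced (E : env) (p p' : rat) (e : expr) (v : value) :=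
  forall G q q' A, typed K S G q q' e A -> balanced E p p' v G q q' A.

(* Inverts the typing judgement in context; derivations ending in relaxation or weakening
   are discharged by [balanced_relax] and [balanced_weaken], leaving the syntax-directed rules. *)
Ltac typing_cases :=
  move=> ? ? ? ? ?;
  match goal with Hty : typed _ _ _ _ _ ?e _ |- _ =>
    let e0 := fresh "e" in let He := fresh "He" in
    remember e as e0 eqn:He; elim: Hty He => //;
    try (intros; match goal with
      | IH : ?d = ?d0 -> balanced _ _ _ _ _ _ _ _, He : ?d = ?d0, rel : _ - _ = _ - _ |- _ =>
          exact: balanced_relax (IH He) rel
      | IH : ?d = ?d0 -> balanced _ _ _ _ ?G _ _ _, He : ?d = ?d0,
        Gx : ?G _ = None, sh : share _ _ _ |- _ =>
          exact: balanced_weaken Gx sh (IH He)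
      end)
  end.

Lemma balanced_app E q q' f x vx v : prog_welltyped K P S -> E x = Some vx ->
  typings_balanced (upd E (P f).1 vx) q q' (P f).2 v ->
  typings_balanced E (q + K_app K) q' (EApp f x) v.
Proof.
move=> wtP Ex IH; typing_cases.
move=> g y A1 A2 r r' Sf _ _ [? ?]; subst => N b.
have [M bM eqM] :=
  ctx_pot_upd E A1 vx (erefl : cempty (P f).1 = None) (ctx_bounded_cempty 0).
have := IH _ _ _ _ (wtP _ _ _ _ _ Sf) M bM.
by rewrite eqM ctx_pot_cempty ctx_pot_csing // Ex /=; lra.
Qed.

Lemma balanced_let E q q1 q' x e1 e2 v1 v :
  typings_balanced E (q - K_let K) q1 e1 v1 -> typings_balanced (upd E x v1) q1 q' e2 v ->
  typings_balanced E q q' (ELet x e1 e2) v.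
Proof.
move=> IH1 IH2; typing_cases.
move=> G1 G2 r r1 r' y d1 d2 A1 A2 disj G2x _ _ Hty1 _ Hty2 _ [? ? ?]; subst.
move=> N /ctx_bounded_cunion_inv[b1 b2].
have := IH1 _ _ _ _ Hty1 N b1.
have [M bM eqM] := ctx_pot_upd E A1 v1 G2x b2.
by have := IH2 _ _ _ _ Hty2 M bM; rewrite eqM ctx_pot_cunion //; lra.
Qed.

Lemma balanced_if E q q' x et ef (c : bool) v : E x = Some (VBool c) ->
  typings_balanced E (q - K_cond K) q' (if c then et else ef) v ->
  typings_balanced E q q' (EIf x et ef) v.
Proof.
move=> Ex IH; typing_cases.
move=> G r r' y dt df A Gx _ _ Htyt _ Htyf _ [? ? ?]; subst.
move=> N b; have [bG _] := ctx_bounded_cext_inv b.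
have Htyc : typed K S G (r - K_cond K) r' (if c then et else ef) A by case: (c).
by have := IH _ _ _ _ Htyc N bG; rewrite ctx_pot_cext // Ex /=; lra.
Qed.

Lemma balanced_matchP E q q' x x1 x2 e v1 v2 v : E x = Some (VPair v1 v2) ->
  typings_balanced (upd (upd E x1 v1) x2 v2) (q - K_matchP K) q' e v ->
  typings_balanced E q q' (EMatchP x x1 x2 e) v.
Proof.
move=> Ex IH; typing_cases.
move=> G r r' y y1 y2 d A1 A2 A Gx Gx1 Gx2 x12 _ _ Htyd _ [? ? ? ?]; subst.
move=> N b; have [bG _] := ctx_bounded_cext_inv b.
have [M bM eqM] := ctx_pot_upd2 E A1 A2 v1 v2 Gx1 Gx2 x12 bG.
by have := IH _ _ _ _ Htyd M bM; rewrite eqM ctx_pot_cext // Ex /=; lra.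
Qed.

Lemma balanced_matchN E q q' x e1 xh xt e2 v : E x = Some (VList [::]) ->
  typings_balanced E (q - K_matchN K) q' e1 v ->
  typings_balanced E q q' (EMatchL x e1 xh xt e2) v.
Proof.
move=> Ex IH; typing_cases.
move=> G r r' y d1 yh yt d2 p A B Gx _ _ _ _ _ Hty1 _ _ _ [? ? ? ? ?]; subst.
move=> N b; have [bG _] := ctx_bounded_cext_inv b.
by have := IH _ _ _ _ Hty1 N bG; rewrite ctx_pot_cext // Ex /=; lra.
Qed.

Lemma balanced_matchL E q q' x e1 xh xt e2 vh vs v : E x = Some (VList (vh :: vs)) ->
  typings_balanced (upd (upd E xh vh) xt (VList vs)) (q - K_matchL K) q' e2 v ->
  typings_balanced E q q' (EMatchL x e1 xh xt e2) v.
Proof.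
move=> Ex IH; typing_cases.
move=> G r r' y d1 yh yt d2 p A B Gx Gxh Gxt xht _ _ _ _ Hty2 _ [? ? ? ? ?]; subst.
move=> N b; have [bG _] := ctx_bounded_cext_inv b.
have [M bM eqM] := ctx_pot_upd2 E A (AList p A) vh (VList vs) Gxh Gxt xht bG.
by have := IH _ _ _ _ Hty2 M bM; rewrite eqM ctx_pot_cext // Ex /=; lra.
Qed.

Lemma balanced_share E q q' x x1 x2 e w v : E x = Some w ->
  typings_balanced (upd (upd (remove E x) x1 w) x2 w) q q' e v ->
  typings_balanced E q q' (EShare x x1 x2 e) v.
Proof.
move=> Ex IH; typing_cases.
move=> G r r' y y1 y2 d A A1 A2 B Gx Gx1 Gx2 x12 _ _ Htyd _ sh [? ? ? ?]; subst.
move=> N b; have [bG _] := ctx_bounded_cext_inv b.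
have [M bM eqM] := ctx_pot_upd2 (remove E x) A1 A2 w w Gx1 Gx2 x12 bG.
have := IH _ _ _ _ Htyd M bM.
by rewrite eqM ctx_pot_remove // ctx_pot_cext // Ex /= (pot_share w sh); lra.
Qed.

Lemma eval_balanced E p p' e v : prog_welltyped K P S ->
  eval K P E p p' e v -> typings_balanced E p p' e v.
Proof.
move=> wtP; elim=> {E p p' e v}.
1-5: by move=> *; typing_cases; move=> * N _; rewrite ctx_pot_cempty /=; ring.
- move=> E q x v _ _ Ex; typing_cases.
  by move=> y A _ [?]; subst => N b; rewrite ctx_pot_csing // Ex /=; ring.
- move=> E q o x1 x2 v1 v2 v _ _ Ex1 Ex2 _; typing_cases;
    by move=> o' y1 y2 _ x12 _ [? ? ?]; subst => N b;
       rewrite ctx_pot_csing2 // Ex1 Ex2 /=; ring.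
- move=> E q x1 x2 v1 v2 _ _ Ex1 Ex2; typing_cases.
  by move=> y1 y2 A1 A2 x12 _ [? ?]; subst => N b; rewrite ctx_pot_csing2 // Ex1 Ex2 /=; ring.
- move=> E q xh xt vh vs _ _ Exh Ext; typing_cases.
  by move=> yh yt p A xht _ [? ?]; subst => N b; rewrite ctx_pot_csing2 // Exh Ext /=; ring.
- by move=> E q q' f x vx v _ Ex _; apply: balanced_app.
- by move=> E q q1 q' x e1 e2 v1 v _ _ IH1 _; apply: balanced_let.
- by move=> E q q' x et ef v _ Ex _; apply: (balanced_if (c := true)).
- by move=> E q q' x et ef v _ Ex _; apply: (balanced_if (c := false)).
- by move=> E q q' x x1 x2 e v1 v2 v _ Ex _; apply: balanced_matchP.
- by move=> E q q' x e1 xh xt e2 v _ Ex _; apply: balanced_matchN.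
- by move=> E q q' x e1 xh xt e2 vh vs v _ Ex _; apply: balanced_matchL.
- by move=> E q q' x x1 x2 e w v Ex _; apply: balanced_share.
Qed.

End CostEquation.

Theorem theorem3 (K : costs) (P : program) (S : signature) :
  sig_nonneg S -> prog_welltyped K P S ->
  forall (G : ctx) (X : var -> Prop) (E : env) (e : expr) (v : value)
         (q q' : rat) (A : atype),
    (forall x, X x -> G x <> None) ->
    env_wf_ctx E G ->
    evals K P E e v ->
    typed K S G q q' e A ->
    share A A A ->
    (forall x B, G x = Some B -> ~ X x -> share B B B) ->
    const_res K P (cerase G) X e.
Proof.
move=> _ wtP G X _ e _ q q' A _ _ _ Hty shA shG.
move=> E1 E2 _ _ approx p1 p1' v1 p2 p2' v2 ev1 ev2.
have [N b] := typed_ctx_bounded Hty.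
rewrite (eval_balanced wtP ev1 Hty b) (eval_balanced wtP ev2 Hty b) !(pot_share_self _ shA).
congr (_ + _ - _); apply: eq_ctx_pot => y.
case Gy: (G y) => [B|]; last by rewrite !opot_None.
have [Xy | nXy] := classic (X y).
  by have [w1 [w2 [-> [-> w12]]]] := approx y Xy; apply: pot_size_eq.
have shB := shG y B Gy nXy.
by rewrite !opot_share_self.
Qed.
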